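(* If $\gamma<\frac14$, then for every $r$ and every $x\in S_r$: (1) $|x-\mu_s|\ge\left(\frac12-2\gamma\right)|\mu_r-\mu_s|$ for all $s\ne r$; (2) $|x-\mu_r|\le\frac{1}{1-4\gamma}|x-\mu_s|$ for all $s\ne r$.
   Context: $\mu_1,\dots,\mu_\beta$ are distinct real numbers (means of $\beta$ distributions) and $\nu_1,\dots,\nu_\beta$ are real numbers (cluster centers). $\Delta_s=|\mu_s-\nu_s|$ and $\gamma=\max_{s,\,r\ne s}\frac{\Delta_s}{|\mu_r-\mu_s|}$. For a finite set of real points, $S_r$ is the set of points $x$ with $|x-\nu_r|\le|x-\nu_s|$ for every $s$. *)

From mathcomp Require Import all_boot all_order all_algebra.
Set Implicit Arguments. Unset Strict Implicit. Unset Printing Implicit Defensive.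
Import Order.TTheory GRing.Theory Num.Theory.
Local Open Scope ring_scope.

(* beta distributions indexed by 'I_beta; mu = means, nu = cluster centers. *)

Definition Delta (R : realFieldType) (beta : nat) (mu nu : 'I_beta -> R)
  (s : 'I_beta) : R := `|mu s - nu s|.

(* gamma = max_{s, r <> s} Delta_s / |mu_r - mu_s|  (all terms are >= 0,
   so starting the max from 0 does not change it when there is a pair) *)
Definition gamma (R : realFieldType) (beta : nat) (mu nu : 'I_beta -> R) : R :=
  \big[Num.max/0]_(s < beta)
     \big[Num.max/0]_(r < beta | r != s) (Delta mu nu s / `|mu r - mu s|).

Definition S_r (R : realFieldType) (beta : nat) (X : seq R)
  (nu : 'I_beta -> R) (r : 'I_beta) : seq R :=
  [seq x <- X | [forall s : 'I_beta, `|x - nu r| <= `|x - nu s|]].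

From mathcomp Require Import all_boot all_order all_algebra lra.
Set Implicit Arguments.
Unset Strict Implicit.
Unset Printing Implicit Defensive.
Import Order.TTheory GRing.Theory Num.Theory.
Local Open Scope ring_scope.

(* Write d = |mu_r - mu_s|.  Both centers lie within gamma d of their means,
   so a point x that is at least as close to nu_r as to nu_s is, up to an
   error 2 gamma d, at least as close to mu_r as to mu_s.  With the triangle
   inequality d <= |x - mu_r| + |x - mu_s| this bounds d by a multiple of
   |x - mu_s|, which is (1); feeding (1) back into the first estimate gives (2). *)

Section Gamma.
Variables (R : realFieldType) (beta : nat) (mu nu : 'I_beta -> R).

Lemma gamma_ge0 : 0 <= gamma mu nu.
Proof. exact: bigmax_ge_id. Qed.

Lemma Delta_le_gamma (s r : 'I_beta) :
  r != s -> Delta mu nu s / `|mu r - mu s| <= gamma mu nu.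
Proof.
move=> neq_rs; apply: le_trans (le_bigmax _ _ s).
exact: (le_bigmax_cond _ (fun r => Delta mu nu s / `|mu r - mu s|) neq_rs).
Qed.

Lemma Delta_le_gammaM (s r : 'I_beta) :
  mu r != mu s -> Delta mu nu s <= gamma mu nu * `|mu r - mu s|.
Proof.
move=> neq_mu; have d_gt0 : 0 < `|mu r - mu s| by rewrite normr_gt0 subr_eq0.
rewrite -ler_pdivrMr //; apply: Delta_le_gamma.
by apply: contraNneq neq_mu => ->.
Qed.

End Gamma.

Section CloserCenter.
Variables (R : realFieldType) (x mr ms nr ns g : R).

Lemma dist_closer_center :
  `|x - nr| <= `|x - ns| ->
  `|mr - nr| <= g * `|mr - ms| -> `|ms - ns| <= g * `|mr - ms| ->
  `|x - mr| <= `|x - ms| + 2 * g * `|mr - ms|.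
Proof.
have le_xmr : `|x - mr| <= `|x - nr| + `|mr - nr|.
  by rewrite [`|mr - nr|]distrC ler_distD.
have le_xns : `|x - ns| <= `|x - ms| + `|ms - ns| by apply: ler_distD.
lra.
Qed.

Lemma closer_center_sep : 0 <= g ->
  `|x - nr| <= `|x - ns| ->
  `|mr - nr| <= g * `|mr - ms| -> `|ms - ns| <= g * `|mr - ms| ->
  (1 / 2 - 2 * g) * `|mr - ms| <= `|x - ms|.
Proof.
move=> g_ge0 closer nr_near ns_near.
have le_d : `|mr - ms| <= `|x - mr| + `|x - ms|.
  by rewrite [`|x - mr|]distrC ler_distD.
have := dist_closer_center closer nr_near ns_near.
have := mulr_ge0 g_ge0 (normr_ge0 (mr - ms)).
lra.
Qed.

Lemma dist_closer_center_ratio : 0 <= g -> g < 1 / 4 ->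
  `|x - nr| <= `|x - ns| ->
  `|mr - nr| <= g * `|mr - ms| -> `|ms - ns| <= g * `|mr - ms| ->
  `|x - mr| <= (1 - 4 * g)^-1 * `|x - ms|.
Proof.
move=> g_ge0 g_lt closer nr_near ns_near.
rewrite mulrC ler_pdivlMr; last lra.
(* 2 g d (1 - 4 g) = 4 g (1/2 - 2 g) d <= 4 g |x - ms| *)
have := ler_wpM2l (mulr_ge0 (ler0n R 4) g_ge0)
  (closer_center_sep g_ge0 closer nr_near ns_near).
have := dist_closer_center closer nr_near ns_near.
nra.
Qed.

End CloserCenter.

Theorem lemma8 (R : realFieldType) (beta : nat) (mu nu : 'I_beta -> R)
  (X : seq R) :
  injective mu ->
  gamma mu nu < 1 / 4 ->
  forall (r : 'I_beta) (x : R), x \in S_r X nu r ->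
    (forall s : 'I_beta, s != r ->
       (1 / 2 - 2 * gamma mu nu) * `|mu r - mu s| <= `|x - mu s|) /\
    (forall s : 'I_beta, s != r ->
       `|x - mu r| <= (1 - 4 * gamma mu nu)^-1 * `|x - mu s|).
Proof.
move=> mu_inj gamma_lt r x; rewrite mem_filter => /andP[/forallP closer_nr _].
have near s t : s != t -> `|mu s - nu s| <= gamma mu nu * `|mu t - mu s|.
  by move=> neq_st; apply: Delta_le_gammaM; rewrite (inj_eq mu_inj) eq_sym.
have near_sr s : s != r ->
    `|mu r - nu r| <= gamma mu nu * `|mu r - mu s| /\
    `|mu s - nu s| <= gamma mu nu * `|mu r - mu s|.
  move=> neq_sr; split; last exact: near.
  by rewrite [`|mu r - mu s|]distrC; apply: near; rewrite eq_sym.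
split=> s /near_sr[near_r near_s].
- exact: closer_center_sep (gamma_ge0 mu nu) (closer_nr s) near_r near_s.
- exact: dist_closer_center_ratio (gamma_ge0 mu nu) gamma_lt (closer_nr s)
    near_r near_s.
Qed.
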